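(* The set of vertices of any simplex $\sigma$ of $X(\mathcal G)$ admits a cyclic order that is preserved by the stabilizer $\mathrm{Stab}(\sigma)<\mathcal G$.
   Context: Let $\mathcal A$ be an Artin group of finite type with generating set $S$ and associated finite Coxeter group $\mathcal W$; $\mathcal A^+$ is the submonoid generated by $S$, and $x<y$ means $y=xz$ with $z\in\mathcal A^+$. An atom is an element of $\mathcal A^+$ whose $S$-word length equals the length of its image in $\mathcal W$; $\Delta$ is the atom mapping to the longest element of $\mathcal W$ ($\Delta^2$ central). For $g\in\mathcal A^+$, $\alpha(g)$ is the largest (for $<$) atom with $\alpha(g)<g$; the normal form of $g$ is $g=A_1\cdot\ldots\cdot A_k$ with nontrivial atoms and $A_i=\alpha(A_i\cdots A_k)$. Let $\mathcal G=\mathcal A/\langle\Delta^2\rangle$ act on $V=\mathcal A/\langle\Delta\rangle$ by left multiplication, $*=\langle\Delta\rangle$. Each $v\in V$ has a unique special representative in $\mathcal A^+$ whose normal form contains no $\Delta$; $|v|$ is its number of atoms and $d_{at}(v,w)=|g^{-1}w|$ for $g( * )=v$. $X(\mathcal G)$ is the simplicial complex on $V$ whose simplices are finite vertex sets pairwise at $d_{at}=1$; $\mathcal G$ acts on it simplicially. *)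

From mathcomp Require Import all_boot.
Set Implicit Arguments. Unset Strict Implicit. Unset Printing Implicit Defensive.

(* Generators S = 'I_n.  A letter (s, true) is s, (s, false) is s^-1. *)
Definition letter (n : nat) := ('I_n * bool)%type.
Definition word (n : nat) := seq (letter n).
Definition pos (n : nat) (p : seq 'I_n) : word n := [seq (s, true) | s <- p].
Definition winv (n : nat) (w : word n) : word n := rev [seq (x.1, ~~ x.2) | x <- w].

Fixpoint alt (n : nat) (s t : 'I_n) (k : nat) : seq 'I_n :=
  if k is k'.+1 then s :: alt t s k' else [::].

(* Coxeter matrix (finite entries; finite type forces this anyway). *)
Definition coxeter_matrix (n : nat) (M : 'I_n -> 'I_n -> nat) : Prop :=
  (forall i, M i i = 1) /\ (forall i j, M i j = M j i) /\
  (forall i j, i != j -> 2 <= M i j).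

Inductive aeq (n : nat) (M : 'I_n -> 'I_n -> nat) : word n -> word n -> Prop :=
| aeq_refl w : aeq M w w
| aeq_sym u v : aeq M u v -> aeq M v u
| aeq_trans u v w : aeq M u v -> aeq M v w -> aeq M u w
| aeq_cancel u v s b : aeq M (u ++ (s, b) :: (s, ~~ b) :: v) (u ++ v)
| aeq_braid u v s t : s != t ->
    aeq M (u ++ pos (alt s t (M s t)) ++ v) (u ++ pos (alt t s (M s t)) ++ v).

(* Equality in the Coxeter group W (words in S suffice since s^-1 = s). *)
Inductive weq (n : nat) (M : 'I_n -> 'I_n -> nat) : seq 'I_n -> seq 'I_n -> Prop :=
| weq_refl w : weq M w w
| weq_sym u v : weq M u v -> weq M v u
| weq_trans u v w : weq M u v -> weq M v w -> weq M u w
| weq_sq u v s : weq M (u ++ s :: s :: v) (u ++ v)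
| weq_braid u v s t : s != t ->
    weq M (u ++ alt s t (M s t) ++ v) (u ++ alt t s (M s t) ++ v).

Definition wlen (n : nat) (M : 'I_n -> 'I_n -> nat) (u : seq 'I_n) (k : nat) : Prop :=
  (exists v, weq M u v /\ size v = k) /\ (forall v, weq M u v -> k <= size v).

Definition finite_type (n : nat) (M : 'I_n -> 'I_n -> nat) : Prop :=
  exists ws : seq (seq 'I_n), forall u, exists2 v, v \in ws & weq M u v.

Definition is_pos (n : nat) M (g : word n) : Prop := exists p, aeq M g (pos p).

Definition prec (n : nat) M (x y : word n) : Prop := exists p, aeq M y (x ++ pos p).

Definition atom (n : nat) M (g : word n) : Prop :=
  exists p, aeq M g (pos p) /\ wlen M p (size p).

Definition isDelta (n : nat) M (d : seq 'I_n) : Prop :=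
  atom M (pos d) /\ forall u k, wlen M u k -> k <= size d.

Definition is_alpha (n : nat) M (g a : word n) : Prop :=
  atom M a /\ prec M a g /\ forall b, atom M b -> prec M b g -> prec M b a.

Definition normal_form (n : nat) M (g : word n) (As : seq (word n)) : Prop :=
  aeq M g (flatten As) /\
  forall i, i < size As ->
    atom M (nth [::] As i) /\ ~ aeq M (nth [::] As i) [::] /\
    is_alpha M (flatten (drop i As)) (nth [::] As i).

Definition dpow (n : nat) (d : seq 'I_n) (k : nat) : word n := flatten (nseq k (pos d)).

(* x<Delta> = y<Delta>: vertices of V = A/<Delta> represented by words *)
Definition veq (n : nat) M (d : seq 'I_n) (x y : word n) : Prop :=
  exists k, aeq M y (x ++ dpow d k) \/ aeq M x (y ++ dpow d k).

Definition vlen (n : nat) M (d : seq 'I_n) (x : word n) (k : nat) : Prop :=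
  exists h As, is_pos M h /\ veq M d x h /\ normal_form M h As /\
    (forall A, A \in As -> ~ aeq M A (pos d)) /\ size As = k.

Definition d_at (n : nat) M (d : seq 'I_n) (x y : word n) (k : nat) : Prop :=
  vlen M d (winv x ++ y) k.

Definition simplex (n : nat) M (d : seq 'I_n) (sigma : seq (word n)) : Prop :=
  forall i j, i < size sigma -> j < size sigma -> i != j ->
    ~ veq M d (nth [::] sigma i) (nth [::] sigma j) /\
    d_at M d (nth [::] sigma i) (nth [::] sigma j) 1.

(* g (an element of G = A/<Delta^2>, represented by a word) lies in Stab(sigma) *)
Definition stab (n : nat) M (d : seq 'I_n) (g : word n) (sigma : seq (word n)) : Prop :=
  (forall x, x \in sigma -> exists2 y, y \in sigma & veq M d (g ++ x) y) /\
  (forall y, y \in sigma -> exists2 x, x \in sigma & veq M d (g ++ x) y).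

From HB Require Import structures.
From mathcomp Require Import all_boot ssralg ssrnum poly algC cyclotomic.
From mathcomp Require Import ring zify.
From Stdlib Require Import Classical ClassicalEpsilon FunctionalExtensionality.
Set Implicit Arguments. Unset Strict Implicit. Unset Printing Implicit Defensive.
Import GRing.Theory Num.Theory.

(* The degree map A -> Z, read modulo N = |Delta|, kills Delta, so it is defined on the
   vertices of X(G), and left multiplication by g shifts it by deg g.  Two vertices at
   atom distance 1 differ by one atom other than 1 and Delta.  Such an atom has length
   strictly between 0 and N: an atom of length N is Delta, because the longest element of
   W is unique (a parity count of reflections, after Tits) and any two reduced words for it
   are related by braid moves (Matsumoto; this uses that s t has order exactly m(s,t) in
   W, seen on the geometric representation).  Hence the vertices of a simplex have
   pairwise distinct degree residues; listing them by residue gives a cyclic order, on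
   which every g in the stabilizer acts as a rotation. *)

Lemma classical_ex_minn (P : nat -> Prop) :
  (exists k, P k) -> exists2 k, P k & forall k', P k' -> k <= k'.
Proof.
move=> [k Pk]; pose Pb k := is_left (excluded_middle_informative (P k)).
have PbP j : reflect (P j) (Pb j).
  by rewrite /Pb; case: excluded_middle_informative => /= Pj; constructor.
have [|k0 /PbP Pk0 min_k0] := ex_minnP (P := Pb); first by exists k; apply/PbP.
by exists k0 => // k' /PbP; apply: min_k0.
Qed.

(** * Coxeter words and the Coxeter group *)

Section CoxeterWords.
Variables (n : nat) (M : 'I_n -> 'I_n -> nat).
Local Notation weq := (weq M).

Lemma weq_catl x u v : weq u v -> weq (x ++ u) (x ++ v).
Proof.
elim=> [w|{}u {}v _|u1 v1 w1 _ IH1 _ IH2|u1 v1 s|u1 v1 s t st].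
- exact: weq_refl.
- exact: weq_sym.
- exact: weq_trans IH1 IH2.
- by rewrite !catA; apply: weq_sq.
- by rewrite !(catA x u1); apply: weq_braid.
Qed.

Lemma weq_catr x u v : weq u v -> weq (u ++ x) (v ++ x).
Proof.
elim=> [w|{}u {}v _|u1 v1 w1 _ IH1 _ IH2|u1 v1 s|u1 v1 s t st].
- exact: weq_refl.
- exact: weq_sym.
- exact: weq_trans IH1 IH2.
- by rewrite -!catA; apply: weq_sq.
- by rewrite -!catA; apply: weq_braid.
Qed.

Lemma weq_cat u u' v v' : weq u u' -> weq v v' -> weq (u ++ v) (u' ++ v').
Proof. by move=> /(weq_catr v) uu' /(weq_catl u') vv'; apply: weq_trans uu' vv'. Qed.

Lemma size_alt (s t : 'I_n) k : size (alt s t k) = k.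
Proof. by elim: k s t => [|k IH] s t //=; rewrite IH. Qed.

Lemma alt_addn (s t : 'I_n) a b :
  alt s t (a + b) = alt s t a ++ (if odd a then alt t s b else alt s t b).
Proof. by elim: a s t => [|a IH] s t //=; rewrite IH; case: (odd a). Qed.

Lemma alt_rcons (s t : 'I_n) k :
  alt s t k.+1 = rcons (alt s t k) (if odd k then t else s).
Proof. by rewrite -[k.+1]addn1 alt_addn -cats1; case: (odd k). Qed.

Lemma rev_alt (s t : 'I_n) k :
  rev (alt s t k) = if odd k then alt s t k else alt t s k.
Proof.
elim: k s t => [|k IH] s t //=.
rewrite rev_cons IH; case: (boolP (odd k)) => ok /=.
- by rewrite -[t :: _]/(alt t s k.+1) alt_rcons ok.
- by rewrite -[s :: _]/(alt s t k.+1) alt_rcons (negbTE ok).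
Qed.

Lemma weq_rev u v : weq u v -> weq (rev u) (rev v).
Proof.
elim=> [w|{}u {}v _|u1 v1 w1 _ IH1 _ IH2|u1 v1 s|u1 v1 s t st].
- exact: weq_refl.
- exact: weq_sym.
- exact: weq_trans IH1 IH2.
- by rewrite !rev_cat !rev_cons -!cats1 -!catA; apply: weq_sq.
- rewrite !rev_cat !rev_alt -!catA; case: (odd (M s t)).
  + exact: weq_braid.
  + exact/weq_sym/weq_braid.
Qed.

Lemma weq_odd_size u v : weq u v -> odd (size u) = odd (size v).
Proof.
elim=> // [u1 v1 w1 _ -> _ -> //|u1 v1 s|u1 v1 s t _].
- by rewrite !size_cat /= !addnS /= negbK.
- by rewrite !size_cat !size_alt.
Qed.

Lemma weq_cat_rev u : weq (u ++ rev u) [::].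
Proof.
elim: u => [|s u IH]; first exact: weq_refl.
have -> : (s :: u) ++ rev (s :: u) = [:: s] ++ (u ++ rev u) ++ [:: s].
  by rewrite rev_cons -cats1 /= catA.
apply: weq_trans (weq_catl _ (weq_catr _ IH)) _.
exact: (weq_sq M [::] [::] s).
Qed.

End CoxeterWords.

Section CoxeterGroup.
Variables (n : nat) (M : 'I_n -> 'I_n -> nat).
Local Notation weq := (weq M).

Definition weqb : rel (seq 'I_n) := fun u v => excluded_middle_informative (weq u v).

Lemma weqbP u v : reflect (weq u v) (weqb u v).
Proof. exact: sumboolP. Qed.

Lemma weqb_equiv : equiv_class_of weqb.
Proof.
split=> [u|u v|v u w]; first exact/weqbP/weq_refl.
  by apply/weqbP/weqbP; apply: weq_sym.
by move=> /weqbP uv /weqbP vw; apply/weqbP; apply: weq_trans uv vw.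
Qed.

Canonical weqb_equiv_rel := EquivRelPack weqb_equiv.

Definition coxeter_group := {eq_quot weqb}%qT.
Local Notation W := coxeter_group.
Definition wcls (u : seq 'I_n) : W := (\pi_W u)%qT.

Lemma wcls_eqP u v : wcls u = wcls v <-> weq u v.
Proof. by split=> [/eqmodP/weqbP|/weqbP/eqmodP]. Qed.

Lemma weq_wcls u v : weq u v -> wcls u = wcls v.
Proof. by move/wcls_eqP. Qed.

Lemma wclsK u : weq (repr (wcls u)) u.
Proof. by apply/wcls_eqP; rewrite /wcls reprK. Qed.

Lemma wclsW (P : W -> Prop) : (forall u, P (wcls u)) -> forall a, P a.
Proof. by move=> Pu a; rewrite -[a]reprK; apply: Pu. Qed.

Definition cox_mul (a b : W) := wcls (repr a ++ repr b).
Definition cox_inv (a : W) := wcls (rev (repr a)).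

Lemma cox_mul_wcls u v : cox_mul (wcls u) (wcls v) = wcls (u ++ v).
Proof. exact/weq_wcls/weq_cat/wclsK/wclsK. Qed.

Lemma cox_inv_wcls u : cox_inv (wcls u) = wcls (rev u).
Proof. exact/weq_wcls/weq_rev/wclsK. Qed.

Lemma cox_mulA : associative cox_mul.
Proof.
by elim/wclsW=> u; elim/wclsW=> v; elim/wclsW=> w; rewrite !cox_mul_wcls catA.
Qed.

Lemma cox_mul1l : left_id (wcls [::]) cox_mul.
Proof. by elim/wclsW=> u; rewrite cox_mul_wcls. Qed.

Lemma cox_mul1r : right_id (wcls [::]) cox_mul.
Proof. by elim/wclsW=> u; rewrite cox_mul_wcls cats0. Qed.

Lemma cox_mulVl : left_inverse (wcls [::]) cox_inv cox_mul.
Proof.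
elim/wclsW=> u; rewrite cox_inv_wcls cox_mul_wcls; apply: weq_wcls.
by have := weq_cat_rev M (rev u); rewrite revK.
Qed.

Lemma cox_mulVr : right_inverse (wcls [::]) cox_inv cox_mul.
Proof. by elim/wclsW=> u; rewrite cox_inv_wcls cox_mul_wcls; apply/weq_wcls/weq_cat_rev. Qed.

HB.instance Definition _ := Choice.on W.
HB.instance Definition _ := isGroup.Build W cox_mulA cox_mul1l cox_mul1r cox_mulVl cox_mulVr.

Local Open Scope group_scope.

Lemma wcls_cat u v : wcls (u ++ v) = wcls u * wcls v.
Proof. by rewrite -cox_mul_wcls. Qed.

Lemma wcls_nil : wcls [::] = 1.
Proof. by []. Qed.

Lemma wcls_rev u : wcls (rev u) = (wcls u)^-1.
Proof. by rewrite -cox_inv_wcls. Qed.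

Definition wgen (s : 'I_n) := wcls [:: s].

Lemma wcls_cons s u : wcls (s :: u) = wgen s * wcls u.
Proof. by rewrite -wcls_cat. Qed.

Lemma wgenV s : (wgen s)^-1 = wgen s.
Proof. by rewrite -wcls_rev. Qed.

Lemma mulgg_wgen s : wgen s * wgen s = 1.
Proof. by rewrite -{1}wgenV mulVg. Qed.

Lemma wcls_braid (s t : 'I_n) : s != t -> wcls (alt s t (M s t)) = wcls (alt t s (M s t)).
Proof. by move=> st; apply: weq_wcls; have := weq_braid M [::] [::] st; rewrite !cats0. Qed.

Lemma wcls_alt_double (s t : 'I_n) : s != t -> wcls (alt s t (M s t).*2) = 1.
Proof.
move=> st; rewrite -addnn alt_addn.
have -> : wcls (alt s t (M s t) ++ (if odd (M s t) then alt t s (M s t) else alt s t (M s t))) =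
          wcls (alt s t (M s t) ++ rev (alt s t (M s t))).
  by rewrite !wcls_cat rev_alt; case: (odd _); rewrite // wcls_braid.
exact/weq_wcls/weq_cat_rev.
Qed.

Lemma wcls_alt_oddV (s t : 'I_n) j : (wcls (alt s t j.*2.+1))^-1 = wcls (alt s t j.*2.+1).
Proof. by rewrite -wcls_rev rev_alt /= odd_double. Qed.

Lemma wcls_alt_odd_sym (s t : 'I_n) a b : s != t -> a + b + 1 = M s t ->
  wcls (alt t s b.*2.+1) = wcls (alt s t a.*2.+1).
Proof.
move=> st ab; apply/esym; rewrite -[LHS]wcls_alt_oddV; apply: mulg1_eq; rewrite -wcls_cat.
have -> : alt s t a.*2.+1 ++ alt t s b.*2.+1 = alt s t (M s t).*2.
  by rewrite -ab (_ : (a + b + 1).*2 = a.*2.+1 + b.*2.+1) ?alt_addn /= ?odd_double //; lia.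
exact: wcls_alt_double.
Qed.

(** * Reflections and the exchange condition *)

(* [(refls q)`_i] is the reflection [s_1 ... s_(i-1) s_i s_(i-1) ... s_1] crossed by the
   word [q = s_1 ... s_k] at its [i]-th letter. *)
Fixpoint refls (q : seq 'I_n) : seq W :=
  if q is s :: q' then wgen s :: [seq r ^ wgen s | r <- refls q'] else [::].

Definition nrefl (q : seq 'I_n) (r : W) := count_mem r (refls q).

Lemma refls_cat u v : refls (u ++ v) = refls u ++ [seq r ^ (wcls u)^-1 | r <- refls v].
Proof.
elim: u => [|s u IH] /=; first by rewrite invg1 (eq_map (@conjg1 _)) map_id.
rewrite IH map_cat -map_comp wcls_cons invgM wgenV.
by congr (_ :: _ ++ _); apply: eq_map => r /=; rewrite conjgM.
Qed.

Lemma nrefl_cat u v r : nrefl (u ++ v) r = nrefl u r + nrefl v (r ^ wcls u).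
Proof.
rewrite /nrefl refls_cat count_cat count_map; congr (_ + _); apply: eq_count => r' /=.
by apply/eqP/eqP => [<-|->]; rewrite ?conjgKV ?conjgK.
Qed.

Lemma refls_alt (s t : 'I_n) k :
  refls (alt s t k) = [seq wcls (alt s t i.*2.+1) | i <- iota 0 k].
Proof.
elim: k s t => [|k IH] s t //=; rewrite IH -[iota 1 k]/(iota (1 + 0) k) iotaDl -!map_comp.
congr (_ :: _); apply: eq_map => i; rewrite /comp add1n doubleS.
rewrite [alt t s i.*2.+2]alt_rcons oddS odd_double -cats1 -cat_cons.
by rewrite wcls_cat wcls_cons conjgE wgenV mulgA.
Qed.

Lemma refls_braid (s t : 'I_n) : s != t ->
  refls (alt t s (M s t)) = rev (refls (alt s t (M s t))).
Proof.
move=> st; rewrite !refls_alt; apply: (@eq_from_nth _ 1); first by rewrite size_rev !size_map.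
move=> i; rewrite size_map size_iota => im.
rewrite nth_rev size_map size_iota // !(nth_map 0) ?size_iota ?nth_iota; try lia.
by apply: wcls_alt_odd_sym => //; lia.
Qed.

Lemma refls_sq s v : refls (s :: s :: v) = wgen s :: wgen s :: refls v.
Proof.
rewrite /= {1}conjgE mulKg -map_comp.
congr [:: _, _ & _]; rewrite -[RHS]map_id; apply: eq_map => r /=.
by rewrite -conjgM mulgg_wgen conjg1.
Qed.

Lemma weq_odd_nrefl u v : weq u v -> forall r, odd (nrefl u r) = odd (nrefl v r).
Proof.
elim=> // [u1 v1 w1 _ IH1 _ IH2 r|u1 v1 s r|u1 v1 s t st r].
- by rewrite IH1 IH2.
- rewrite !nrefl_cat /nrefl refls_sq /= !oddD.
  by case: (_ == _); case: (odd (count_mem _ (refls v1))).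
- by rewrite !nrefl_cat wcls_braid // /nrefl refls_braid // count_rev.
Qed.

Definition reduced (q : seq 'I_n) := forall v, weq q v -> size q <= size v.

Lemma reducedP q : reduced q <-> forall v, wcls q = wcls v -> size q <= size v.
Proof. by split=> Rq v /wcls_eqP; apply: Rq. Qed.

Lemma not_reduced q : ~ reduced q -> exists2 v, wcls q = wcls v & size v < size q.
Proof.
move=> NRq; apply: NNPP => Nv; apply: NRq => v /weq_wcls qv.
by rewrite leqNgt; apply/negP => vq; apply: Nv; exists v.
Qed.

Lemma reduced_size u v : reduced u -> reduced v -> wcls u = wcls v -> size u = size v.
Proof. by move=> /reducedP Ru /reducedP Rv uv; apply/eqP; rewrite eqn_leq Ru // Rv. Qed.

Lemma reduced_eq_size u v : reduced u -> wcls u = wcls v -> size u = size v -> reduced v.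
Proof.
by move=> /reducedP Ru uv uvs; apply/reducedP => w vw; rewrite -uvs Ru // uv.
Qed.

Lemma exists_reduced u : exists v, [/\ wcls u = wcls v, reduced v & size v <= size u].
Proof.
elim: {u}(size u) {-2}u (leqnn (size u)) => [|k IH] u uk.
  by exists u; split=> // v _; move: uk; rewrite leqn0 => /eqP->.
have [Ru|/not_reduced[v uv vu]] := classic (reduced u); first by exists u.
have [|w [vw Rw wv]] := IH v; first by lia.
by exists w; split=> //; [rewrite uv | lia].
Qed.

Lemma reduced_catl u v : reduced (u ++ v) -> reduced u.
Proof.
move=> /reducedP Ruv; apply: NNPP => /not_reduced[w uw wu].
by have := Ruv (w ++ v); rewrite !wcls_cat uw !size_cat => /(_ erefl); lia.
Qed.

Lemma reduced_catr u v : reduced (u ++ v) -> reduced v.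
Proof.
move=> /reducedP Ruv; apply: NNPP => /not_reduced[w vw wv].
by have := Ruv (u ++ w); rewrite !wcls_cat vw !size_cat => /(_ erefl); lia.
Qed.

Lemma reduced_rev u : reduced u -> reduced (rev u).
Proof. by move=> Ru v /weq_rev; rewrite revK => /Ru; rewrite !size_rev. Qed.

Lemma mem_refls_delete z r : r \in refls z ->
  exists2 i, i < size z & r * wcls z = wcls (take i z ++ drop i.+1 z).
Proof.
elim: z r => [|s z IH] r //=; rewrite inE => /predU1P[->|/mapP[r' /IH[i iz rz] ->]].
  by exists 0; rewrite // wcls_cons mulgA mulgg_wgen mul1g drop0.
exists i.+1 => //; rewrite wcls_cons conjgE wgenV -!mulgA (mulgA (wgen s) (wgen s)).
by rewrite mulgg_wgen mul1g rz -wcls_cons.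
Qed.

Lemma mem_refls_invol z r : r \in refls z -> r * r = 1.
Proof.
elim: z r => [|s z IH] r //=; rewrite inE => /predU1P[->|/mapP[r' /IH rr' ->]].
  exact: mulgg_wgen.
by rewrite -conjMg rr' conj1g.
Qed.

Lemma reduced_cons_notin s q : reduced (s :: q) -> wgen s \notin refls q.
Proof.
move=> /reducedP Rsq; apply/negP => /mem_refls_delete[i iq sq].
have := Rsq (take i q ++ drop i.+1 q); rewrite wcls_cons sq => /(_ erefl).
by rewrite size_cat size_take size_drop iq /=; lia.
Qed.

Lemma odd_nrefl_rev a r : odd (nrefl (rev a) (r ^ wcls a)) = odd (nrefl a r).
Proof.
have := weq_odd_nrefl (weq_cat_rev M a) r; rewrite nrefl_cat oddD /nrefl /=.
by case: (odd (count_mem r _)); case: (odd _).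
Qed.

Definition refl_word (x : seq 'I_n) s := x ++ s :: rev x.

Lemma wcls_refl_word x s : wcls (refl_word x s) = wgen s ^ (wcls x)^-1.
Proof. by rewrite /refl_word -cat1s !wcls_cat wcls_rev conjgE invgK mulgA. Qed.

Lemma refl_word_invol x s : wcls (refl_word x s) * wcls (refl_word x s) = 1.
Proof. by rewrite wcls_refl_word -conjMg mulgg_wgen conj1g. Qed.

Lemma odd_size_refl_word x s : odd (size (refl_word x s)).
Proof. by rewrite size_cat /= size_rev addnS /= addnn odd_double. Qed.

Lemma odd_nrefl_refl_word x s : odd (nrefl (refl_word x s) (wcls (refl_word x s))).
Proof.
rewrite /refl_word nrefl_cat -cat1s nrefl_cat -/(refl_word x s) wcls_refl_word conjgKV.
have -> : wgen s ^ wcls [:: s] = (wgen s ^ (wcls x)^-1) ^ wcls x.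
  by rewrite conjgKV conjgE mulKg.
by rewrite !oddD odd_nrefl_rev /nrefl /= eqxx; case: (odd _).
Qed.

Lemma odd_nrefl_mem q r : odd (nrefl q r) -> r \in refls q.
Proof. by apply: contraTT => /count_memPn; rewrite /nrefl => ->. Qed.

Lemma strong_exchange p x s z : reduced p ->
    ~~ odd (nrefl p (wcls (refl_word x s))) ->
  wcls z = wcls (refl_word x s) * wcls p -> size p < size z.
Proof.
set r := wcls (refl_word x s) => Rp even_p zrp; rewrite ltnNge; apply/negP => zp.
have zw : weq z (refl_word x s ++ p) by apply/wcls_eqP; rewrite wcls_cat.
have z_ne_p : size z != size p.
  apply/eqP=> zpe; move: (weq_odd_size zw).
  by rewrite size_cat oddD odd_size_refl_word zpe; case: odd.
have /odd_nrefl_mem/mem_refls_delete[i iz rz] : odd (nrefl z r).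
  rewrite (weq_odd_nrefl zw) nrefl_cat oddD odd_nrefl_refl_word -/r.
  by rewrite (_ : r ^ r = r) ?conjgE ?mulKg //; case: odd even_p.
rewrite zrp mulgA refl_word_invol mul1g in rz.
have := (reducedP _).1 Rp _ rz.
by rewrite size_cat size_take size_drop iz; lia.
Qed.

Lemma reduced_cons s q : reduced q -> wgen s \notin refls q -> reduced (s :: q).
Proof.
move=> Rq sq v /weq_sym/weq_wcls vsq.
apply: (@strong_exchange q [::] s) => //; rewrite [refl_word _ _]/= -/(wgen s).
  by rewrite /nrefl (count_memPn sq).
by rewrite vsq wcls_cons.
Qed.

Lemma exchange s q : reduced q -> ~ reduced (s :: q) -> wgen s \in refls q.
Proof. by move=> Rq NRsq; apply: NNPP => /negP sq; apply/NRsq/reduced_cons. Qed.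

Section LongestElement.
Variables (N : nat) (p : seq 'I_n).
Hypothesis length_bound : forall u, reduced u -> size u <= N.
Hypotheses (Rp : reduced p) (size_p : size p = N).

Lemma longest_odd_nrefl x s : odd (nrefl p (wcls (refl_word x s))).
Proof.
apply: NNPP => /negP even_p.
have [z [pz Rz _]] := exists_reduced (refl_word x s ++ p).
have := strong_exchange Rp even_p (_ : wcls z = _); rewrite -pz wcls_cat => /(_ erefl).
by have := length_bound Rz; lia.
Qed.

Lemma longest_mulV x : reduced x ->
  exists2 z, wcls (rev x ++ p) = wcls z & size z + size x = N.
Proof.
elim/last_ind: x => [|x s IH] Rxs; first by exists p; rewrite ?addn0.
have [|z xpz zx] := IH; first by apply: (@reduced_catl _ [:: s]); rewrite cats1.
have Rz : reduced z.
  apply/reducedP => v zv; rewrite leqNgt; apply/negP => vz.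
  have := (reducedP _).1 Rp (x ++ v); rewrite !wcls_cat -zv -xpz wcls_cat wcls_rev mulVKg.
  by rewrite size_cat => /(_ erefl); lia.
have s_x : wgen s \notin refls (rev x).
  by apply: reduced_cons_notin; rewrite -rev_rcons; apply: reduced_rev.
have /odd_nrefl_mem/mem_refls_delete[i iz sz] : odd (nrefl z (wgen s)).
  rewrite -(weq_odd_nrefl ((wcls_eqP _ _).1 xpz)) nrefl_cat wcls_rev -wcls_refl_word.
  by rewrite oddD longest_odd_nrefl /nrefl (count_memPn s_x).
exists (take i z ++ drop i.+1 z); first by rewrite rev_rcons wcls_cons xpz.
by rewrite size_cat size_take size_drop iz size_rcons; lia.
Qed.

Lemma longest_unique q : reduced q -> size q = N -> wcls q = wcls p.
Proof.
move=> /longest_mulV[z qpz zq] size_q; move: qpz; rewrite wcls_cat wcls_rev.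
by rewrite (size0nil (_ : size z = 0)) ?wcls_nil; [move/mulg1_eq; rewrite invgK | lia].
Qed.

End LongestElement.

End CoxeterGroup.

(** * The geometric representation *)

Section GeometricRepresentation.
Local Open Scope ring_scope.
Variables (n : nat) (M : 'I_n -> 'I_n -> nat).
Hypothesis hM : coxeter_matrix M.

Lemma coxeter_sym i j : M i j = M j i. Proof. by case: hM => _ []. Qed.
Lemma coxeter_diag i : M i i = 1%N. Proof. by case: hM. Qed.
Lemma coxeter_ge2 i j : i != j -> (2 <= M i j)%N. Proof. by case: hM => _ [] _; apply. Qed.
Lemma coxeter_gt0 i j : (0 < M i j)%N.
Proof. by case: (eqVneq i j) => [->|/coxeter_ge2]; [rewrite coxeter_diag | lia]. Qed.

Definition zeta (m : nat) : algC :=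
  if m is m'.+1 then sval (@C_prim_root_exists (m'.+1).*2 isT) else 1.

Section Zeta.
Variable m : nat.
Hypothesis m_gt0 : (0 < m)%N.
Local Notation z := (zeta m).

Lemma zeta_prim : (m.*2).-primitive_root z.
Proof. by case: m m_gt0 => // m' _ /=; case: C_prim_root_exists. Qed.

Lemma zeta_expr_eq1 i : (z ^+ i == 1) = (m.*2 %| i)%N.
Proof. by rewrite (prim_order_dvd zeta_prim). Qed.

Lemma zeta_neq0 : z != 0.
Proof.
apply: contra_neq (oner_neq0 algC) => z0; rewrite -(prim_expr_order zeta_prim) z0 expr0n.
by rewrite double_eq0 eqn0Ngt m_gt0.
Qed.

Lemma zeta_expr_half : z ^+ m = -1.
Proof.
have /eqP : (z ^+ m - 1) * (z ^+ m + 1) = 0.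
  by rewrite -subr_sqr expr1n -exprM muln2 prim_expr_order ?zeta_prim // subrr.
rewrite mulf_eq0 subr_eq0 addr_eq0 zeta_expr_eq1 => /orP[/dvdn_leq|/eqP //].
by rewrite -muln2 => /(_ m_gt0); lia.
Qed.

End Zeta.

(* [cox_form i j = - cos (pi / M i j)], written with a primitive [2 M i j]-th root of unity. *)
Definition cox_form (i j : 'I_n) : algC := - (zeta (M i j) + (zeta (M i j))^-1) / 2.

Lemma cox_form_sym i j : cox_form i j = cox_form j i.
Proof. by rewrite /cox_form coxeter_sym. Qed.

Lemma cox_form_diag i : cox_form i i = 1.
Proof.
have := zeta_expr_half (isT : (0 < 1)%N); rewrite /cox_form coxeter_diag expr1 => ->.
by rewrite invrN invr1; field.
Qed.

Definition vec := 'I_n -> algC.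
Definition bform (i : 'I_n) (v : vec) : algC := \sum_j cox_form i j * v j.
Definition evec (k : 'I_n) : vec := fun j => (j == k)%:R.
Definition srefl (i : 'I_n) (v : vec) : vec := fun j => v j - 2 * bform i v * evec i j.

Fixpoint wact (q : seq 'I_n) (v : vec) : vec :=
  if q is i :: q' then srefl i (wact q' v) else v.

Lemma bform_ext i (v w : vec) : v =1 w -> bform i v = bform i w.
Proof. by move=> vw; apply: eq_bigr => j _; rewrite vw. Qed.

Lemma bformD i (v w : vec) : bform i (fun j => v j + w j) = bform i v + bform i w.
Proof. by rewrite /bform -big_split; apply: eq_bigr => j _; rewrite mulrDr. Qed.

Lemma bformZ i (v : vec) a : bform i (fun j => a * v j) = a * bform i v.
Proof. by rewrite /bform mulr_sumr; apply: eq_bigr => j _; rewrite mulrCA. Qed.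

Lemma bformB i (v w : vec) : bform i (fun j => v j - w j) = bform i v - bform i w.
Proof.
rewrite (bform_ext i (_ : _ =1 fun j => v j + (-1) * w j)) => [|j]; last by ring.
by rewrite bformD bformZ; ring.
Qed.

Lemma bform_evec i k : bform i (evec k) = cox_form i k.
Proof.
rewrite /bform (bigD1 k) //= big1 => [|j /negbTE jk]; last by rewrite /evec jk mulr0.
by rewrite /evec eqxx mulr1 addr0.
Qed.

Lemma bform_srefl i v : bform i (srefl i v) = - bform i v.
Proof.
rewrite (bform_ext i (_ : _ =1 fun j => v j + (- 2 * bform i v) * evec i j)) => [|j]; last first.
  by rewrite /srefl; ring.
by rewrite bformD bformZ bform_evec cox_form_diag; ring.
Qed.

Lemma srefl_invol i v : srefl i (srefl i v) = v.
Proof. by apply: functional_extensionality => j; rewrite {1}/srefl bform_srefl /srefl; ring. Qed.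

Lemma wact_cat u w v : wact (u ++ w) v = wact u (wact w v).
Proof. by elim: u => //= i u ->. Qed.

Lemma wact_rev u v : wact (rev u) (wact u v) = v.
Proof. by elim: u v => //= i u IH v; rewrite rev_cons -cats1 wact_cat /= srefl_invol IH. Qed.

Lemma wact_alt_orth (s t : 'I_n) k (y q : vec) : bform s y = 0 -> bform t y = 0 ->
  wact (alt s t k) (fun j => y j + q j) = fun j => y j + wact (alt s t k) q j.
Proof.
elim: k s t => // k IH s t ys yt /=; rewrite IH //.
by apply: functional_extensionality => j; rewrite /srefl bformD ys add0r; ring.
Qed.

Section DihedralPlane.
Variables (s t : 'I_n).
Hypothesis st : s != t.
Local Notation c := (cox_form s t).
Local Notation m := (M s t).
Local Notation z := (zeta m).

Definition pvec (a b : algC) : vec := fun j => a * evec s j + b * evec t j.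

Lemma bform_pvec i a b : bform i (pvec a b) = a * cox_form i s + b * cox_form i t.
Proof. by rewrite bformD !bformZ !bform_evec. Qed.

Lemma srefl_pvec_s a b : srefl s (pvec a b) = pvec (- a - 2 * c * b) b.
Proof.
by apply: functional_extensionality => j; rewrite /srefl bform_pvec cox_form_diag /pvec; ring.
Qed.

Lemma srefl_pvec_t a b : srefl t (pvec a b) = pvec a (- b - 2 * c * a).
Proof.
apply: functional_extensionality => j.
by rewrite /srefl bform_pvec cox_form_diag (cox_form_sym t s) /pvec; ring.
Qed.

(* The matrix of [s t] on the plane spanned by [evec s] and [evec t]. *)
Definition st_rot (p : algC * algC) : algC * algC :=
  ((4 * c ^+ 2 - 1) * p.1 + 2 * c * p.2, - 2 * c * p.1 - p.2).

Lemma wact_alt_pvec k a b :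
  wact (alt s t k.*2) (pvec a b) = pvec (iter k st_rot (a, b)).1 (iter k st_rot (a, b)).2.
Proof.
elim: k => //= k ->; rewrite srefl_pvec_t srefl_pvec_s.
by congr pvec; rewrite /st_rot /=; ring.
Qed.

Fixpoint cheb (k : nat) : algC :=
  match k with 0 => 0 | 1 => 1 | (k'.+1 as k1).+1 => (4 * c ^+ 2 - 2) * cheb k1 - cheb k' end.
Arguments cheb : simpl never.

Lemma cheb0 : cheb 0 = 0. Proof. by []. Qed.
Lemma cheb1 : cheb 1 = 1. Proof. by []. Qed.
Lemma chebSS k : cheb k.+2 = (4 * c ^+ 2 - 2) * cheb k.+1 - cheb k. Proof. by []. Qed.

(* Cayley-Hamilton for [st_rot], whose trace is [4 c^2 - 2] and determinant is [1]. *)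
Lemma iter_st_rot k p :
  iter k.+1 st_rot p =
    (cheb k.+1 * (st_rot p).1 - cheb k * p.1, cheb k.+1 * (st_rot p).2 - cheb k * p.2).
Proof.
case: p => a b; elim: k => [|k IH]; first by rewrite /= cheb1 cheb0 /st_rot /=; congr pair; ring.
by rewrite iterS IH chebSS /st_rot /=; congr pair; ring.
Qed.

Lemma cheb_closed (l mu : algC) : l * mu = 1 -> 4 * c ^+ 2 - 2 = l + mu ->
  forall k, cheb k * (l - mu) = l ^+ k - mu ^+ k.
Proof.
move=> lmu th; suff IH k : cheb k * (l - mu) = l ^+ k - mu ^+ k /\
    cheb k.+1 * (l - mu) = l ^+ k.+1 - mu ^+ k.+1 by move=> k; case: (IH k).
elim: k => [|k [IH1 IH2]]; first by rewrite cheb0 cheb1 expr0 expr1; split; ring.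
split=> //; rewrite chebSS th mulrBl -mulrA IH2 IH1 !exprS.
apply/eqP; rewrite -subr_eq0.
have -> : forall x y, (l + mu) * (l * x - mu * y) - (x - y) - (l * (l * x) - mu * (mu * y))
    = (l * mu - 1) * (x - y) by move=> x y; ring.
by rewrite lmu subrr mul0r.
Qed.

Let m_ge2 : (2 <= m)%N := coxeter_ge2 st.
Let m_gt0 : (0 < m)%N := coxeter_gt0 s t.
Let zeta_neq0_st : z != 0 := zeta_neq0 m_gt0.

Lemma cox_form_trace : 4 * c ^+ 2 - 2 = z ^+ 2 + (z ^+ 2)^-1.
Proof. by have := zeta_neq0_st; rewrite /cox_form => zn0; field. Qed.

Lemma zeta_sq_mulV : z ^+ 2 * (z ^+ 2)^-1 = 1.
Proof. by rewrite mulfV // expf_neq0 // zeta_neq0_st. Qed.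

Lemma zeta_expr4_eq1 : (z ^+ 4 == 1) = (m == 2%N).
Proof.
rewrite zeta_expr_eq1 ?m_gt0 //; apply/idP/eqP => [/dvdn_leq|->] //.
by have := m_ge2; lia.
Qed.

Lemma cox_form_eq0 : (c == 0) = (m == 2%N).
Proof.
have zn0 := zeta_neq0_st.
have -> : c = - ((z ^+ 2 + 1) / z) / 2 by rewrite /cox_form; congr (- _ / _); field.
rewrite mulf_eq0 invr_eq0 pnatr_eq0 orbF oppr_eq0 mulf_eq0 invr_eq0 (negbTE zn0) orbF.
rewrite addr_eq0 -zeta_expr4_eq1; apply/eqP/eqP => [z2|].
  by rewrite (_ : 4 = 2 * 2)%N // exprM z2 sqrrN expr1n.
by move/eqP; rewrite zeta_expr4_eq1 => /eqP m2; have := zeta_expr_half m_gt0; rewrite m2.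
Qed.

Lemma zeta_sq_neqV : (3 <= m)%N -> z ^+ 2 - (z ^+ 2)^-1 != 0.
Proof.
move=> m3; rewrite subr_eq0; apply: contraTneq m3 => z2.
suff /eqP -> : m == 2%N by [].
by rewrite -zeta_expr4_eq1 (_ : 4 = 2 + 2)%N // exprD {2}z2 zeta_sq_mulV.
Qed.

Lemma st_rot_period p : iter m st_rot p = p.
Proof.
have [m2|m3] := eqVneq m 2%N.
  have /eqP c0 : c == 0 by rewrite cox_form_eq0 m2.
  by rewrite m2 /st_rot c0; case: p => a b /=; congr pair; ring.
have {}m3 : (3 <= m)%N by have := m_ge2; lia.
have cheb_m := cheb_closed zeta_sq_mulV cox_form_trace.
have zm : (z ^+ 2) ^+ m = 1 by rewrite -exprM mul2n prim_expr_order ?zeta_prim ?m_gt0.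
have zm1 : (z ^+ 2) ^+ m.-1 = (z ^+ 2)^-1.
  have z2n0 : z ^+ 2 != 0 by rewrite expf_neq0 ?zeta_neq0_st.
  by apply: (mulIf z2n0); rewrite -exprSr prednK ?m_gt0 // zm mulVf.
have U_m : cheb m = 0.
  apply/eqP; rewrite -(mulIr_eq0 _ (mulIf (zeta_sq_neqV m3))) cheb_m.
  by rewrite zm exprVn zm invr1 subrr.
have U_m1 : cheb m.-1 = -1.
  apply: (mulIf (zeta_sq_neqV m3)); rewrite cheb_m zm1 exprVn zm1 invrK; ring.
rewrite -(prednK m_gt0) iter_st_rot prednK ?m_gt0 // U_m U_m1.
by case: p => a b /=; congr pair; ring.
Qed.

(* If [(s t)^k] fixes [evec s] then [cheb k = 0] and [cheb k.-1 = -1]; with the eigenvalues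
   [z^2] and [z^-2] of [st_rot] this forces [z^(2 k) = 1], i.e. [m] divides [k]. *)
Lemma st_rot_faithful k : (0 < k < m)%N -> iter k st_rot (1, 0) != (1, 0).
Proof.
case: k => // k /andP[_ km]; apply/eqP; rewrite iter_st_rot /st_rot => -[E1 E2].
have [c0|cn0] := eqVneq c 0.
  have k0 : k = 0%N by move/eqP: c0 (km); rewrite cox_form_eq0 => /eqP->; lia.
  move: E1; rewrite k0 c0 cheb1 cheb0 => /eqP.
  by rewrite -subr_eq0 (_ : _ - 1 = - 2 :> algC) ?oppr_eq0 ?pnatr_eq0 //; ring.
have m3 : (3 <= m)%N by move: cn0; rewrite cox_form_eq0; have := m_ge2; lia.
have U_k1 : cheb k.+1 = 0.
  move/eqP: E2; rewrite !mulr0 !mulr1 subr0 subr0 mulf_eq0 => /orP[/eqP //|].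
  by rewrite mulf_eq0 oppr_eq0 pnatr_eq0 (negbTE cn0).
have U_k : cheb k = -1.
  by move: E1; rewrite U_k1 !mul0r sub0r mulr1 => /eqP; rewrite eqr_oppLR => /eqP.
have lmu := zeta_sq_mulV; have lmun0 := zeta_sq_neqV m3.
set l := z ^+ 2 in lmu lmun0; set mu := l^-1 in lmu lmun0.
have cheb_z := cheb_closed lmu cox_form_trace.
set e := l ^+ k.+1.
have le : mu ^+ k.+1 = e by apply/eqP; rewrite eq_sym -subr_eq0 -cheb_z U_k1 mul0r.
have lk : l ^+ k = e * mu by rewrite /e exprSr -mulrA lmu mulr1.
have muk : mu ^+ k = e * l by rewrite -le exprSr -mulrA [mu * l]mulrC lmu mulr1.
have e1 : e = 1.
  have := cheb_z k; rewrite U_k lk muk => /eqP; rewrite -subr_eq0.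
  have -> : -1 * (l - mu) - (e * mu - e * l) = (e - 1) * (l - mu) by ring.
  by rewrite mulf_eq0 (negbTE lmun0) orbF subr_eq0 => /eqP.
move: e1; rewrite /e /l -exprM => /eqP; rewrite zeta_expr_eq1 ?m_gt0 //.
by rewrite -mul2n dvdn_pmul2l // => /dvdn_leq; lia.
Qed.

Lemma cox_form_nondeg : 1 - c ^+ 2 != 0.
Proof.
have zn0 := zeta_neq0_st.
have -> : 1 - c ^+ 2 = - ((z ^+ 2 - 1) / (2 * z)) ^+ 2 by rewrite /cox_form; field.
rewrite oppr_eq0 expf_eq0 /= mulf_eq0 invr_eq0 mulf_eq0 pnatr_eq0 (negbTE zn0) orbF.
rewrite subr_eq0 zeta_expr_eq1 ?m_gt0 // orbF; apply/negP => /dvdn_leq.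
by have := m_ge2; lia.
Qed.

(* [y] splits into a vector of the [s t]-plane, on which [(s t)^m] is the identity, and a
   vector orthogonal to [evec s] and [evec t], which [s] and [t] fix. *)
Lemma wact_alt_double y : wact (alt s t m.*2) y = y.
Proof.
have nd := cox_form_nondeg.
pose a := (bform s y - c * bform t y) / (1 - c ^+ 2).
pose b := (bform t y - c * bform s y) / (1 - c ^+ 2).
pose y' j := y j - pvec a b j.
have y's : bform s y' = 0 by rewrite bformB bform_pvec cox_form_diag /a /b; field.
have y't : bform t y' = 0.
  by rewrite bformB bform_pvec cox_form_diag (cox_form_sym t s) /a /b; field.
have y_split : y = fun j => y' j + pvec a b j.
  by apply: functional_extensionality => j; rewrite /y'; ring.
by have := wact_alt_orth m.*2 (pvec a b) y's y't; rewrite wact_alt_pvec st_rot_period -y_split.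
Qed.

Lemma wact_braid y : wact (alt s t m) y = wact (alt t s m) y.
Proof.
have alt_double : alt s t m ++ rev (alt t s m) = alt s t m.*2.
  by rewrite -addnn alt_addn rev_alt; case: odd.
by rewrite -{1}(wact_rev (alt t s m) y) -wact_cat alt_double wact_alt_double.
Qed.

End DihedralPlane.

Lemma wact_weq u v : weq M u v -> forall y, wact u y = wact v y.
Proof.
elim=> // [u1 v1 w1 _ IH1 _ IH2 y|u1 v1 s y|u1 v1 s t st y].
- by rewrite IH1 IH2.
- by rewrite !wact_cat /= srefl_invol.
- by rewrite !wact_cat wact_braid.
Qed.

Lemma coxeter_dihedral_order (s t : 'I_n) k : s != t -> (0 < k < M s t)%N ->
  ~ weq M (alt s t k.*2) [::].
Proof.
move=> st km /wact_weq/(_ (evec s)) /=.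
have -> : evec s = pvec s t 1 0 by apply: functional_extensionality => j; rewrite /pvec; ring.
rewrite wact_alt_pvec // => /(congr1 (fun v => (v s, v t))).
rewrite /pvec /evec /= !eqxx (eq_sym t s) (negbTE st) !mulr1 !mulr0 !addr0 !add0r => E.
by have := st_rot_faithful st km; rewrite [iter _ _ _]surjective_pairing E eqxx.
Qed.

End GeometricRepresentation.

(** * Dihedral prefixes and Matsumoto's theorem *)

Section Matsumoto.
Variables (n : nat) (M : 'I_n -> 'I_n -> nat).
Hypothesis hM : coxeter_matrix M.
Local Notation weq := (weq M).
Local Notation wcls := (wcls M).
Local Notation wgen := (wgen M).
Local Notation refls := (refls M).
Local Notation reduced := (reduced M).
Local Open Scope group_scope.

Lemma reduced_alt (s t : 'I_n) j : s != t -> j <= M s t -> reduced (alt s t j).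
Proof.
elim: j s t => [|j IH] s t st jm; first by move=> v.
apply: reduced_cons; first by apply: IH; rewrite 1?eq_sym // (coxeter_sym hM); lia.
apply/negP; rewrite refls_alt => /mapP[i]; rewrite mem_iota add0n => /andP[_ ij] si.
apply: (coxeter_dihedral_order hM (k := i.+1) st); first by apply/andP; split=> //; lia.
apply/wcls_eqP; rewrite doubleS -[alt s t _]/([:: s] ++ alt t s i.*2.+1).
by rewrite wcls_cat -si mulgg_wgen.
Qed.

Section DihedralWords.
Variables (s t : 'I_n).
Hypothesis st : s != t.

Definition st_word (x : seq 'I_n) := all (fun i => (i == s) || (i == t)) x.
Definition st_minimal (x : seq 'I_n) :=
  forall x', st_word x' -> wcls x' = wcls x -> size x <= size x'.

Lemma st_word_alt k : st_word (alt s t k) && st_word (alt t s k).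
Proof. by elim: k => //= k /andP[-> ->]; rewrite !eqxx orbT. Qed.

Lemma st_minimal_behead r x : st_word (r :: x) -> st_minimal (r :: x) -> st_minimal x.
Proof.
move=> /andP[rst xst] min_rx x' x'st x'x.
by have := min_rx (r :: x'); rewrite /= rst x'st !wcls_cons x'x => /(_ isT erefl); lia.
Qed.

Lemma st_word_cat x y : st_word (x ++ y) = st_word x && st_word y.
Proof. exact: all_cat. Qed.

Lemma st_minimal_sq a y : st_word (a :: a :: y) -> ~ st_minimal (a :: a :: y).
Proof.
case/and3P=> _ _ yst min_aay; have := min_aay y yst.
by rewrite (weq_wcls (weq_sq M [::] y a)) => /(_ erefl) /=; lia.
Qed.

Lemma st_minimal_sorted x : st_word x -> st_minimal x -> sorted (fun a b => a != b) x.
Proof.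
elim: x => [|r [|r' x] IH] // rxst min_rx.
have /andP[_ xst] := rxst.
rewrite /= -/(sorted _ (r' :: x)) (IH xst (st_minimal_behead rxst min_rx)) andbT.
by apply/eqP => rr'; move: rxst min_rx; rewrite rr'; apply: st_minimal_sq.
Qed.

Lemma st_word_sorted_alt x : st_word x -> sorted (fun a b => a != b) x ->
  x = alt s t (size x) \/ x = alt t s (size x).
Proof.
elim: x => [|r x IH] /=; first by left.
case/andP=> rst xst rx; have := IH xst (path_sorted rx).
case: x rx {IH xst} => [_ _|r' x /andP[rr' _]] /=.
  by case/orP: rst => /eqP->; [left|right].
case=> -[r'E xE]; rewrite {}r'E in rr' *; case/orP: rst rr' => /eqP-> sr.
- by rewrite eqxx in sr.
- by right; rewrite -xE.
- by left; rewrite -xE.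
- by rewrite eqxx in sr.
Qed.

Lemma st_minimal_alt x : st_word x -> st_minimal x ->
  x = alt s t (size x) \/ x = alt t s (size x).
Proof. by move=> xst /(st_minimal_sorted xst); apply: st_word_sorted_alt. Qed.

Lemma wcls_alt_long (a b : 'I_n) : a != b ->
  wcls (alt a b (M a b).+1) = wcls (alt b a (M a b).-1).
Proof.
move=> ab; rewrite -[alt a b _]/(a :: alt b a (M a b)) wcls_cons (coxeter_sym hM).
rewrite wcls_braid 1?eq_sym // -(coxeter_sym hM) -(prednK (coxeter_gt0 hM a b)) /=.
by rewrite wcls_cons mulgA mulgg_wgen mul1g.
Qed.

Lemma alt_not_st_minimal (a b : 'I_n) k : a != b ->
    (forall j, st_word (alt a b j) && st_word (alt b a j)) -> M a b < k ->
  ~ st_minimal (alt a b k).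
Proof.
move=> ab abst mk; rewrite -(subnKC mk); set r := k - (M a b).+1 => min_ab.
have := min_ab (alt b a (M a b).-1 ++ (if odd (M a b).+1 then alt b a r else alt a b r)).
rewrite alt_addn !wcls_cat wcls_alt_long // st_word_cat !size_cat !size_alt.
case/andP: (abst (M a b).-1) => _ ->; case/andP: (abst r) => ar br.
by have := coxeter_gt0 hM a b; case: odd; rewrite ?ar ?br size_alt => m0 /(_ isT erefl); lia.
Qed.

Lemma st_minimal_size x : st_word x -> st_minimal x -> size x <= M s t.
Proof.
move=> xst min_x; rewrite leqNgt; apply/negP => long.
case: (st_minimal_alt xst min_x) => xE; move: min_x; rewrite xE.
  by apply: alt_not_st_minimal => // j; apply: st_word_alt.
apply: alt_not_st_minimal; first by rewrite eq_sym.
  by move=> j; rewrite andbC st_word_alt.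
by rewrite (coxeter_sym hM).
Qed.

Lemma st_word_delete x i : st_word x -> st_word (take i x ++ drop i.+1 x).
Proof.
by move=> /allP xst; apply/allP => y; rewrite mem_cat => /orP[/mem_take|/mem_drop]; apply: xst.
Qed.

Section MinimalFactor.
Variables (w x0 q0 : seq 'I_n).
Hypotheses (x0st : st_word x0) (w_x0q0 : wcls w = wcls (x0 ++ q0)).
Hypothesis q0_min : forall x q, st_word x -> wcls w = wcls (x ++ q) -> size q0 <= size q.

Lemma min_factor_refls x r : st_word x -> (r == s) || (r == t) ->
    wgen r \in refls (x ++ q0) ->
  exists2 x', st_word x' & wcls (r :: x) = wcls x' /\ (size x').+1 = size x.
Proof.
move=> xst rst; rewrite refls_cat mem_cat => /orP[/mem_refls_delete[i ix rx]|].
  exists (take i x ++ drop i.+1 x); first exact: st_word_delete.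
  by rewrite wcls_cons rx size_cat size_take size_drop ix; split=> //; lia.
case/mapP=> r' /[dup] r'q0 /mem_refls_delete[i iq0 r'q0'] rr'; exfalso.
have r'E : r' = wcls (rev x) * wcls (r :: x).
  by rewrite wcls_cons wcls_rev rr' -conjgE conjgKV.
have := @q0_min (x0 ++ rev x ++ r :: x) (take i q0 ++ drop i.+1 q0).
rewrite !st_word_cat x0st /st_word all_rev /= -/(st_word x) xst rst => /(_ isT).
rewrite w_x0q0 [in X in _ = X -> _]wcls_cat -r'q0' !wcls_cat -r'E -mulgA (mulgA r').
rewrite (mem_refls_invol r'q0) mul1g.
move=> /(_ erefl).
by rewrite size_cat size_take size_drop iq0; lia.
Qed.

Lemma min_factor_reduced x : st_word x -> st_minimal x -> reduced (x ++ q0).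
Proof.
elim: x => [|r x IH] /=.
  move=> _ _; apply: NNPP => /not_reduced[v q0v vq0].
  have := q0_min x0st (_ : _ = wcls (x0 ++ v)).
  by rewrite w_x0q0 !wcls_cat q0v => /(_ erefl); lia.
move=> /[dup] rxst /andP[rst xst] min_rx; apply: NNPP.
move=> /(exchange (IH xst (st_minimal_behead rxst min_rx))).
case/(min_factor_refls xst rst) => x' x'st [rxx' x'x].
by have := min_rx x' x'st (esym rxx'); rewrite /=; lia.
Qed.

End MinimalFactor.

Lemma exists_min_st_factor w : exists x0 q0, [/\ st_word x0, wcls w = wcls (x0 ++ q0) &
  forall x q, st_word x -> wcls w = wcls (x ++ q) -> size q0 <= size q].
Proof.
have := @classical_ex_minn
  (fun k => exists x q, [/\ st_word x, wcls w = wcls (x ++ q) & size q = k]).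
case=> [|_ [x0 [q0 [x0st w_x0q0 <-]]] q0_min]; first by exists (size w), [::], w.
by exists x0, q0; split=> // x q xst wxq; apply: q0_min; exists x, q.
Qed.

Lemma exists_st_minimal x0 : st_word x0 ->
  exists2 x1, st_word x1 & wcls x1 = wcls x0 /\ st_minimal x1.
Proof.
move=> x0st; have := @classical_ex_minn
  (fun k => exists2 x, st_word x & wcls x = wcls x0 /\ size x = k).
case=> [|_ [x1 x1st [x1x0 <-]] x1_min]; first by exists (size x0), x0.
by exists x1 => //; split=> // x' x'st x'x1; apply: x1_min; exists x'; rewrite ?x'x1.
Qed.

Lemma dihedral_prefix w : reduced w -> ~ reduced (s :: w) -> ~ reduced (t :: w) ->
  exists2 y, wcls w = wcls (alt s t (M s t) ++ y) & M s t + size y = size w.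
Proof.
move=> Rw NRs NRt; have [x0 [q0 [x0st w_x0q0 q0_min]]] := exists_min_st_factor w.
have [x1 x1st [x1x0 min_x1]] := exists_st_minimal x0st.
have w_x1q0 : wcls w = wcls (x1 ++ q0) by rewrite w_x0q0 !wcls_cat x1x0.
have R1 := min_factor_reduced x0st w_x0q0 q0_min x1st min_x1.
have size_w : size w = size (x1 ++ q0) := reduced_size Rw R1 w_x1q0.
have desc r : (r == s) || (r == t) -> ~ reduced (r :: w) -> ~ reduced (r :: x1).
  move=> rst NRr /reducedP Rrx1.
  have [|x' _ [rx1x' x'x1]] := min_factor_refls x0st w_x0q0 q0_min x1st rst.
    apply: exchange R1 _ => Rr; apply: NRr; apply: reduced_eq_size Rr _ _.
      by rewrite !wcls_cons w_x1q0.
    by rewrite /= size_w.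
  by have := Rrx1 _ rx1x'; rewrite /=; lia.
have x1_size : size x1 = M s t.
  apply/eqP; rewrite eqn_leq st_minimal_size //= leqNgt; apply/negP => x1m.
  have [x1E|x1E] := st_minimal_alt x1st min_x1.
  - apply: (desc t _ NRt); first by rewrite eqxx orbT.
    rewrite x1E -[t :: _]/(alt t s (size x1).+1).
    by apply: reduced_alt; rewrite 1?eq_sym // (coxeter_sym hM).
  - apply: (desc s _ NRs); first by rewrite eqxx.
    by rewrite x1E -[s :: _]/(alt s t (size x1).+1); apply: reduced_alt.
exists q0; last by rewrite size_w size_cat x1_size.
rewrite w_x1q0 !wcls_cat; congr (_ * _).
by case: (st_minimal_alt x1st min_x1) => ->; rewrite x1_size // wcls_braid.
Qed.

End DihedralWords.

Lemma aeq_catl (x u v : word n) : aeq M u v -> aeq M (x ++ u) (x ++ v).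
Proof.
elim=> [w|{}u {}v _|u1 v1 w1 _ IH1 _ IH2|u1 v1 s b|u1 v1 s t st].
- exact: aeq_refl.
- exact: aeq_sym.
- exact: aeq_trans IH1 IH2.
- by rewrite !(catA x u1); apply: aeq_cancel.
- by rewrite !(catA x u1); apply: aeq_braid.
Qed.

Lemma pos_cat (p q : seq 'I_n) : pos (p ++ q) = pos p ++ pos q.
Proof. exact: map_cat. Qed.

Lemma aeq_pos_cons s (p q : seq 'I_n) :
  aeq M (pos p) (pos q) -> aeq M (pos (s :: p)) (pos (s :: q)).
Proof. exact: (aeq_catl [:: (s, true)]). Qed.

Theorem matsumoto p q : reduced p -> reduced q -> wcls p = wcls q -> aeq M (pos p) (pos q).
Proof.
move: {2}(size p) (erefl (size p)) => k; elim: k p q => [|k IH] p q size_p Rp Rq pq.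
  have size_q := reduced_size Rp Rq pq.
  by rewrite (size0nil size_p) (size0nil (etrans (esym size_q) size_p)); apply: aeq_refl.
have size_q := reduced_size Rp Rq pq.
case: p size_p Rp pq size_q => // s p [size_p] Rsp; case: q Rq => // t q Rtq sptq [size_q].
have Rp : reduced p := reduced_catr (u := [:: s]) Rsp.
have Rq : reduced q := reduced_catr (u := [:: t]) Rtq.
have [st_eq|st] := eqVneq s t.
  subst t; apply/aeq_pos_cons/IH => //.
  by apply: (mulgI (wgen s)); rewrite -!wcls_cons.
have NRs : ~ reduced (s :: s :: p).
  by move/reducedP/(_ p); rewrite (weq_wcls (weq_sq M [::] p s)) => /(_ erefl) /=; lia.
have NRt : ~ reduced (t :: s :: p).
  move/reducedP/(_ q); rewrite wcls_cons sptq -wcls_cons.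
  by rewrite (weq_wcls (weq_sq M [::] q t)) => /(_ erefl) /=; lia.
have [y spy size_y] := dihedral_prefix st Rsp NRs NRt.
have m_gt0 := coxeter_gt0 hM s t.
have alt_cons a b : alt a b (M s t) = a :: alt b a (M s t).-1 by rewrite -(prednK m_gt0).
have Ry : reduced (alt s t (M s t) ++ y).
  by apply: reduced_eq_size Rsp spy _; rewrite size_cat size_alt /= size_y.
have Ry' : reduced (alt t s (M s t) ++ y).
  by apply: reduced_eq_size Ry _ _; rewrite ?wcls_cat ?wcls_braid // !size_cat !size_alt.
apply: aeq_trans (_ : aeq M _ (pos (alt s t (M s t) ++ y))) _.
  rewrite alt_cons; apply/aeq_pos_cons/IH => //.
  - by move: Ry; rewrite alt_cons => /(reduced_catr (u := [:: s])).
  - by apply: (mulgI (wgen s)); rewrite -!wcls_cons spy alt_cons.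
apply: aeq_trans (_ : aeq M _ (pos (alt t s (M s t) ++ y))) _.
  by rewrite !pos_cat; apply: (aeq_braid M [::] (pos y) st).
apply: aeq_sym; rewrite alt_cons; apply/aeq_pos_cons/IH => //.
- by rewrite -size_q.
- by move: Ry'; rewrite alt_cons => /(reduced_catr (u := [:: t])).
- apply: (mulgI (wgen t)); rewrite -!wcls_cons -sptq spy -cat_cons -alt_cons.
  by rewrite !wcls_cat wcls_braid.
Qed.

End Matsumoto.

(** * Cyclic orders by residues *)

Lemma nth_rot (T : Type) (x0 : T) (s : seq T) r i : r <= size s -> i < size s ->
  nth x0 (rot r s) i = nth x0 s ((i + r) %% size s).
Proof.
move=> rs i_s; rewrite /rot nth_cat size_drop; case: ltnP => ir.
  by rewrite nth_drop modn_small 1?addnC //; lia.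
rewrite nth_take; last by lia.
rewrite (_ : i + r = i - (size s - r) + size s) ?modnDr ?modn_small //; lia.
Qed.

Section AddModRotation.
Variables (N c : nat) (a : seq nat).
Hypotheses (c_lt_N : c < N) (a_sorted : sorted ltn a) (a_lt_N : all (gtn N) a).
Hypothesis a_closed : {subset [seq (x + c) %% N | x <- a] <= a}.
Local Notation T x := ((x + c) %% N).

Lemma addmod_rot : exists2 r, r <= size a & [seq T x | x <- a] = rot r a.
Proof.
pose W x := N <= x + c; set p := find W a.
have T_nowrap x : ~~ W x -> T x = x + c by rewrite /W -ltnNge => xcN; rewrite modn_small.
have T_wrap x : x < N -> W x -> T x = x + c - N.
  by move=> xN xcN; rewrite -{1}(subnK xcN) modnDr modn_small //; lia.
have take_nowrap : all (predC W) (take p a).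
  by rewrite all_predC has_take_leq ?find_size // ltnn.
have drop_wrap : all W (drop p a).
  have [hasW|noW] := boolP (has W a); last by rewrite drop_oversize // leqNgt -has_find.
  have p_lt : p < size a by rewrite -has_find.
  have Wp : W (nth 0 a p) := nth_find 0 hasW.
  have := drop_sorted p a_sorted; rewrite (drop_nth 0 p_lt) /= Wp.
  move=> /(order_path_min ltn_trans)/allP gt_p; apply/allP => y /gt_p.
  by move: Wp; rewrite /W; lia.
have a_lt x : x \in a -> x < N by move/(allP a_lt_N).
have sorted_rot : sorted ltn (rot p [seq T x | x <- a]).
  rewrite -map_rot /rot map_cat (sorted_pairwise ltn_trans) pairwise_cat.
  rewrite -!(sorted_pairwise ltn_trans); apply/and3P; split.
  - apply/allrelP => _ _ /mapP[x xd ->] /mapP[y yt ->].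
    have Wx : W x := allP drop_wrap x xd; have nWy : ~~ W y := allP take_nowrap y yt.
    rewrite T_wrap ?a_lt ?(mem_drop xd) // T_nowrap //.
    by move: Wx (a_lt x (mem_drop xd)); rewrite /W; lia.
  - apply: (homo_sorted_in (P := [pred x | W x && (x < N)])); last exact: drop_sorted a_sorted.
      move=> x y /andP[Wx xN] /andP[Wy yN] xy; rewrite !T_wrap //.
      by move: Wx Wy; rewrite /W; lia.
    by apply/allP => x xd; rewrite /= (allP drop_wrap) ?a_lt ?(mem_drop xd).
  - apply: (homo_sorted_in (P := predC W)); last exact: take_sorted a_sorted.
      by move=> x y Wx Wy xy; rewrite !T_nowrap //; lia.
    exact: take_nowrap.
have uniq_a := sorted_uniq ltn_trans ltnn a_sorted.
have T_inj : {in a &, injective (fun x => T x)}.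
  move=> x y xa ya /eqP; rewrite eqn_modDr !modn_small ?a_lt //; exact/eqP.
have uniq_Ta : uniq [seq T x | x <- a] by rewrite (map_inj_in_uniq T_inj).
have [_ Ta_a] := uniq_min_size uniq_Ta a_closed (eq_leq (esym (size_map _ a))).
exists (size a - p); first exact: leq_subr.
rewrite -[LHS](rotK p) (irr_sorted_eq ltn_trans ltnn sorted_rot a_sorted) //.
by move=> x; rewrite mem_rot Ta_a.
Qed.

End AddModRotation.

Lemma cyclic_order_by_key (T : eqType) (x0 : T) (N : nat) (key : T -> nat) (s : seq T) :
    0 < N -> uniq [seq key x %% N | x <- s] ->
  exists l, perm_eq l s /\
    forall (R : T -> T -> Prop) c,
      (forall x, x \in s -> exists2 y, y \in s & R x y) ->
      (forall x y, R x y -> key y = key x + c %[mod N]) ->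
    exists r, forall i, i < size l -> R (nth x0 l i) (nth x0 l ((i + r) %% size l)).
Proof.
move=> N_gt0; set res := fun x => key x %% N => uniq_res.
pose l := sort (fun x y => res x <= res y) s.
have perm_l : perm_eq l s by rewrite perm_sort.
exists l; split=> // R c R_total R_shift.
pose a := [seq res x | x <- l].
have uniq_a : uniq a by rewrite (perm_uniq (perm_map res perm_l)).
have a_sorted : sorted ltn a.
  by rewrite ltn_sorted_uniq_leq uniq_a sorted_map (sort_sorted (fun x y => leq_total _ _)).
have a_lt_N : all (gtn N) a by apply/allP => _ /mapP[x _ ->]; apply: ltn_pmod.
have a_closed : {subset [seq (x + c %% N) %% N | x <- a] <= a}.
  move=> _ /mapP[_ /mapP[x xl ->] ->].
  have [|y ys /R_shift Rxy] := R_total x; first by rewrite -(perm_mem perm_l).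
  by rewrite modnDm -Rxy; apply: map_f; rewrite (perm_mem perm_l).
have [r r_le Ta] := addmod_rot (ltn_pmod c N_gt0) a_sorted a_lt_N a_closed.
exists r => i il; have [|y ys Ry] := R_total (nth x0 l i).
  by rewrite -(perm_mem perm_l) mem_nth.
have yl : y \in l by rewrite (perm_mem perm_l).
suff <- : index y l = (i + r) %% size l by rewrite nth_index.
have size_a : size a = size l by rewrite size_map.
have res_y : nth 0 a (index y l) = nth 0 a ((i + r) %% size l).
  rewrite -size_a.
  have := congr1 (fun s => nth 0 s i) Ta; rewrite (@nth_rot _ 0 a r i r_le) ?size_a // => <-.
  rewrite (nth_map 0) ?size_a // !(nth_map x0) ?index_mem //.
  by rewrite nth_index // /res modnDm (R_shift _ _ Ry).
apply/eqP; rewrite -(nth_uniq 0 _ _ uniq_a) ?size_a ?index_mem ?ltn_pmod ?res_y //.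
by apply: leq_ltn_trans il.
Qed.

(** * The degree on the Artin group and the simplices of X(G) *)

Section ArtinDegree.
Variables (n : nat) (M : 'I_n -> 'I_n -> nat) (d : seq 'I_n).
Local Notation N := (size d).

Definition npos (w : word n) := count (fun x : letter n => x.2) w.
Definition nneg (w : word n) := count (fun x : letter n => ~~ x.2) w.

Lemma npos_cat u v : npos (u ++ v) = npos u + npos v.
Proof. exact: count_cat. Qed.

Lemma nneg_cat u v : nneg (u ++ v) = nneg u + nneg v.
Proof. exact: count_cat. Qed.

Lemma npos_pos p : npos (pos p) = size p.
Proof. by elim: p => //= s p ->. Qed.

Lemma nneg_pos p : nneg (pos p) = 0.
Proof. by elim: p. Qed.

Lemma aeq_balance u v : aeq M u v -> npos u + nneg v = npos v + nneg u.
Proof.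
elim=> // [u1 v1 w1 _ IH1 _ IH2|u1 v1 s b|u1 v1 s t _]; first lia.
- by rewrite !npos_cat !nneg_cat /npos /nneg /=; case: b => /=; lia.
- by rewrite !npos_cat !nneg_cat !npos_pos !nneg_pos !size_alt; lia.
Qed.

Lemma aeq_pos_size p q : aeq M (pos p) (pos q) -> size p = size q.
Proof. by move/aeq_balance; rewrite !npos_pos !nneg_pos !addn0. Qed.

(* Inverse letters count [N - 1 = -1 (mod N)]: [deg] is the degree map [A -> Z] reduced
   modulo [N], which kills [Delta]. *)
Definition deg (w : word n) := npos w + N.-1 * nneg w.

Lemma deg_cat u v : deg (u ++ v) = deg u + deg v.
Proof. by rewrite /deg /npos /nneg !count_cat; lia. Qed.

Lemma deg_pos p : deg (pos p) = size p.
Proof. by rewrite /deg npos_pos nneg_pos muln0 addn0. Qed.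

Hypothesis N_gt0 : 0 < N.

Lemma aeq_deg u v : aeq M u v -> deg u = deg v %[mod N].
Proof.
move/aeq_balance => bal; rewrite -(modnMDl (nneg v)) -[in RHS](modnMDl (nneg u)).
by congr (_ %% _); rewrite /deg; case: N N_gt0 bal => // N' _ /=; nia.
Qed.

Lemma deg_dpow k : deg (dpow d k) = k * N.
Proof.
elim: k => [|k IH]; first by rewrite /deg /= muln0.
by rewrite /dpow /= deg_cat -/(dpow d k) IH deg_pos mulSn.
Qed.

Lemma npos_winv x : npos (winv x) = nneg x.
Proof. by rewrite /npos /winv count_rev count_map. Qed.

Lemma nneg_winv x : nneg (winv x) = npos x.
Proof. by rewrite /nneg /winv count_rev count_map; apply: eq_count => -[? []]. Qed.

Lemma deg_winv x : deg (winv x) + deg x = size x * N.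
Proof.
have sx : npos x + nneg x = size x.
  by rewrite /npos /nneg -(count_predC (fun y : letter n => y.2)).
by rewrite /deg npos_winv nneg_winv -sx; case: N N_gt0 => // N' _ /=; nia.
Qed.

Lemma veq_deg x y : veq M d x y -> deg x = deg y %[mod N].
Proof.
by case=> k [] /aeq_deg; rewrite deg_cat deg_dpow -modnDmr modnMl addn0 => ->.
Qed.

End ArtinDegree.

Section Delta.
Variables (n : nat) (M : 'I_n -> 'I_n -> nat) (d : seq 'I_n).
Hypotheses (hM : coxeter_matrix M) (hD : isDelta M d).
Local Notation reduced := (reduced M).

Lemma reduced_wlen p : reduced p <-> wlen M p (size p).
Proof. by split=> [Rp|[]//]; split=> //; exists p; split=> //; apply: weq_refl. Qed.

Lemma reduced_size_delta u : reduced u -> size u <= size d.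
Proof. by move/reduced_wlen; apply: hD.2. Qed.

Lemma aeq_weq u v : aeq M u v -> weq M (map fst u) (map fst v).
Proof.
elim=> [w|{}u {}v _|u1 v1 w1 _ IH1 _ IH2|u1 v1 s b|u1 v1 s t st].
- exact: weq_refl.
- exact: weq_sym.
- exact: weq_trans IH1 IH2.
- by rewrite !map_cat; apply: weq_sq.
- by rewrite !map_cat -!map_comp !map_id; apply: weq_braid.
Qed.

Lemma reduced_delta : reduced d.
Proof.
have [[p [dp /reduced_wlen Rp]] _] := hD.
apply: reduced_eq_size Rp _ (aeq_pos_size (aeq_sym dp)).
by apply/weq_wcls/weq_sym; have := aeq_weq dp; rewrite /pos -!map_comp !map_id.
Qed.

Lemma aeq_delta p : reduced p -> size p = size d -> aeq M (pos p) (pos d).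
Proof.
move=> Rp size_p; apply: (matsumoto hM Rp reduced_delta).
exact: (longest_unique (@reduced_size_delta) reduced_delta erefl Rp size_p).
Qed.

Lemma atom_size A : atom M A -> ~ aeq M A [::] -> ~ aeq M A (pos d) ->
  exists2 p, aeq M A (pos p) & 0 < size p < size d.
Proof.
case=> p [Ap /reduced_wlen Rp] A_nil A_delta; exists p => //.
rewrite lt0n size_eq0 ltn_neqAle reduced_size_delta // andbT; apply/andP; split.
  by apply/eqP => p0; apply: A_nil; rewrite p0 in Ap.
by apply/eqP => /(aeq_delta Rp) pd; apply: A_delta; apply: aeq_trans Ap pd.
Qed.

Lemma d_at1_deg x y :
  d_at M d x y 1 -> 0 < size d /\ deg d x %% size d != deg d y %% size d.
Proof.
case=> h [As [_ [xy_h [[h_As nf] [notD size_As]]]]].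
case: As size_As h_As nf notD => [|A []] // _ h_A nf notD.
have [atA [A_nil _]] := nf 0 isT.
have [p Ap /andP[p_gt0 p_lt]] := atom_size atA A_nil (notD A (mem_head _ _)).
have N_gt0 : 0 < size d by apply: leq_trans p_lt.
split=> //; apply/eqP => xy.
have : size p = 0 %[mod size d].
  rewrite -(deg_pos d) -(aeq_deg N_gt0 Ap) -[A]cats0 -(aeq_deg N_gt0 h_A).
  rewrite -(veq_deg N_gt0 xy_h).
  by rewrite deg_cat -modnDmr -xy modnDmr (deg_winv N_gt0) modnMl mod0n.
by rewrite mod0n modn_small // => p0; rewrite p0 in p_gt0.
Qed.

End Delta.

Theorem lemma4p7 (n : nat) (M : 'I_n -> 'I_n -> nat) (d : seq 'I_n)
    (sigma : seq (word n)) :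
  coxeter_matrix M -> finite_type M -> isDelta M d -> simplex M d sigma ->
  exists l : seq (word n), perm_eq l sigma /\
    forall g : word n, stab M d g sigma ->
      exists r, forall i, i < size l ->
        veq M d (g ++ nth [::] l i) (nth [::] l ((i + r) %% size l)).
Proof.
move=> hM _ hD hs.
have [small|large] := leqP (size sigma) 1.
  exists sigma; split=> // g [g_sigma _]; exists 0 => i; rewrite addn0.
  case: sigma hs small g_sigma => [|x []] // _ _ g_sigma; case: i => // _.
  by have [y] := g_sigma x (mem_head _ _); rewrite inE => /eqP->.
have [N_gt0 _] := d_at1_deg hM hD (hs 0 1 (ltnW large) large isT).2.
have uniq_deg : uniq [seq deg d x %% size d | x <- sigma].
  apply/(uniqP 0) => i j; rewrite !inE size_map => il jl; rewrite !(nth_map [::]) //.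
  by apply: contra_eq => ij; apply: (d_at1_deg hM hD (hs i j il jl ij).2).2.
have [l [perm_l rot_l]] := cyclic_order_by_key [::] N_gt0 uniq_deg.
exists l; split=> // g [g_sigma _]; apply: (rot_l _ (deg d g) g_sigma) => x y.
by move/(veq_deg N_gt0); rewrite deg_cat addnC => <-.
Qed.
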